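(* Let $s \geq 3$, $b \geq 1$ and $a \geq 128$ be integers and let $q$ be a prime power with $q \geq a\log q$. Let $\mathcal{H}$ be a partial linear space with point set $P$ and line set $L$ satisfying properties (i)–(v) below. Then for every $X \subseteq L$, $$\sum_{p \in P_X} |X_p| > \tfrac{1}{2}(a\log q)\,|X| - 2abq^2\log q.$$ Properties: (i) $|L| = q^2(q^2-q+1)$; (ii) $a(q^2\log q)/2 \leq |P| \leq 2aq^2\log q$; (iii) each line has at least $(a\log q)/2$ points; (iv) for any pair of lines, the number of $(s+1)$-fans containing that pair is at most $(2a\log q)^s$; (v) every set of $s+1$ pairwise intersecting lines either passes through a common point or is an $(s+1)$-fan.
   Context: A partial linear space consists of a set of points and a set of lines (sets of points) such that any two distinct lines share at most one point. For $t \geq 3$, a $t$-fan is a set of $t$ pairwise intersecting lines such that $t-1$ of them pass through a common point and the remaining one does not pass through that point. For $X \subseteq L$ and $p \in P$, $X_p$ denotes the set of lines in $X$ containing $p$, and $P_X = \{p \in P : |X_p| \geq b\}$. $\log$ is the natural logarithm. (Such $\mathcal{H}$ exists for these parameters.) *)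

From Stdlib Require Import Reals.
From mathcomp Require Import all_boot.

Set Implicit Arguments.
Unset Strict Implicit.
Unset Printing Implicit Defensive.

(* Points are the elements of a finite type T (point set P = [set: T]);
   lines are subsets of points, the line set is L : {set {set T}}. *)

Definition partial_linear_space (T : finType) (L : {set {set T}}) : Prop :=
  forall l1 l2, l1 \in L -> l2 \in L -> l1 != l2 -> #|l1 :&: l2| <= 1.

Definition pairwise_intersecting (T : finType) (F : {set {set T}}) : bool :=
  [forall l1 in F, forall l2 in F, (l1 != l2) ==> (l1 :&: l2 != set0)].

Definition concurrent (T : finType) (F : {set {set T}}) : bool :=
  [exists x, forall l in F, x \in l].

Definition is_fan (T : finType) (t : nat) (F : {set {set T}}) : bool :=
  [&& 3 <= t, #|F| == t, pairwise_intersecting F &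
      [exists x, exists m in F,
         (x \notin m) && [forall l in F, (l != m) ==> (x \in l)]]].

Definition lines_through (T : finType) (X : {set {set T}}) (p : T) : {set {set T}} :=
  [set l in X | p \in l].

Definition rich_points (T : finType) (b : nat) (X : {set {set T}}) : {set T} :=
  [set p | b <= #|lines_through X p|].

Definition prime_power (q : nat) : Prop :=
  exists p k, [/\ prime p, 0 < k & q = p ^ k].

(** Double counting of incidences: the lines of [X] carry at least
    [|X| a log q / 2] incidences, while each point outside [P_X] lies on
    fewer than [b] lines of [X], so the points outside [P_X] account for at
    most [(b - 1) |P| <= (b - 1) 2 a q^2 log q] of them. Only (ii), (iii) and
    [q >= 2] are needed. *)

From Stdlib Require Import Reals Lra.
From mathcomp Require Import all_boot.

Set Implicit Arguments.
Unset Strict Implicit.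

Local Open Scope R_scope.

Lemma sum_card_lines_through (T : finType) (X : {set {set T}}) :
  (\sum_(p : T) #|lines_through X p| = \sum_(l in X) #|l|)%N.
Proof.
transitivity (\sum_(p : T) \sum_(l in X) (p \in l : nat))%N.
  apply: eq_bigr => p _; rewrite -sum1_card big_mkcond [RHS]big_mkcond /=.
  by apply: eq_bigr => l _; rewrite inE; case: (l \in X); case: (p \in l).
rewrite exchange_big; apply: eq_bigr => l _.
by rewrite -sum1_card [RHS]big_mkcond.
Qed.

Lemma sum_card_lines_through_poor (T : finType) (b : nat) (X : {set {set T}}) :
  (\sum_(p in ~: rich_points b X) #|lines_through X p| <= (b - 1) * #|T|)%N.
Proof.
apply: (@leq_trans (\sum_(p in ~: rich_points b X) (b - 1))%N).
  apply: leq_sum => p; rewrite in_setC inE -ltnNge => lt_pb.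
  by rewrite -(leq_add2r 1) addn1 subnK // (leq_ltn_trans _ lt_pb).
by rewrite sum_nat_const mulnC leq_mul2l max_card orbT.
Qed.

Lemma sum_card_lines_through_rich (T : finType) (b : nat) (X : {set {set T}}) :
  (\sum_(l in X) #|l| <=
   \sum_(p in rich_points b X) #|lines_through X p| + (b - 1) * #|T|)%N.
Proof.
rewrite -sum_card_lines_through (bigID [in rich_points b X]) /= leq_add2l.
rewrite (eq_bigl [in ~: rich_points b X]) => [|p]; last by rewrite in_setC.
exact: sum_card_lines_through_poor.
Qed.

Lemma INR_sum_ge (I : finType) (A : {set I}) (f : I -> nat) (c : R) :
  (forall i, i \in A -> c <= INR (f i)) ->
  INR #|A| * c <= INR (\sum_(i in A) f i).
Proof.
move=> le_c_f; rewrite -sum1_card.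
apply: (big_ind2 (fun n m => INR n * c <= INR m)) => [|n1 n2 m1 m2 h1 h2|i Ai].
- by rewrite Rmult_0_l; apply: Rle_refl.
- by rewrite !plus_INR Rmult_plus_distr_r; apply: Rplus_le_compat.
- by rewrite Rmult_1_l; apply: le_c_f.
Qed.

Lemma prime_power_gt1 (q : nat) : prime_power q -> (1 < q)%N.
Proof.
case=> p [k [p_prime k_gt0 ->]].
by rewrite -(prednK k_gt0) expnS (leq_trans (prime_gt1 p_prime)) // leq_pmulr
  // expn_gt0 prime_gt0.
Qed.

Theorem lemma4p2 (s b a q : nat) (T : finType) (L : {set {set T}}) :
  (3 <= s)%N -> (1 <= b)%N -> (128 <= a)%N -> prime_power q ->
  INR a * ln (INR q) <= INR q ->
  partial_linear_space L ->
  (* (i) *)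
  #|L| = (q ^ 2 * (q ^ 2 - q + 1))%N ->
  (* (ii) *)
  INR a * (INR q ^ 2 * ln (INR q)) / 2 <= INR #|T| ->
  INR #|T| <= 2 * INR a * INR q ^ 2 * ln (INR q) ->
  (* (iii) *)
  (forall l, l \in L -> INR a * ln (INR q) / 2 <= INR #|l|) ->
  (* (iv) *)
  (forall l1 l2, l1 \in L -> l2 \in L -> l1 <> l2 ->
     INR #|[set F : {set {set T}} | [&& F \subset L, l1 \in F, l2 \in F
                                       & is_fan s.+1 F] ]|
      <= (2 * INR a * ln (INR q)) ^ s) ->
  (* (v) *)
  (forall F : {set {set T}}, F \subset L -> #|F| = s.+1 ->
     pairwise_intersecting F -> concurrent F \/ is_fan s.+1 F) ->
  forall X : {set {set T}}, X \subset L ->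
    INR (\sum_(p in rich_points b X) #|lines_through X p|) >
     INR a * ln (INR q) / 2 * INR #|X| - 2 * INR a * INR b * INR q ^ 2 * ln (INR q).
Proof.
move=> _ b_ge1 a_ge128 q_pp _ _ _ _ T_ub line_lb _ _ X sub_XL.
set M := 2 * INR a * INR q ^ 2 * ln (INR q).
have M_gt0 : 0 < M.
  have q_gt1 : 1 < INR q by apply: (lt_INR 1); apply/ltP; exact: prime_power_gt1.
  have a_gt0 : 0 < INR a by apply: (lt_INR 0); apply/ltP; exact: leq_trans a_ge128.
  have lnq_gt0 : 0 < ln (INR q) by rewrite -ln_1; apply: ln_increasing; lra.
  have q2_gt0 : 0 < INR q ^ 2 by apply: pow_lt; lra.
  by rewrite /M; repeat apply: Rmult_lt_0_compat => //; lra.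
have incid_lb := @INR_sum_ge _ X (fun l => #|l|) _
  (fun l lX => line_lb l (subsetP sub_XL l lX)).
have /leP/le_INR := sum_card_lines_through_rich b X.
rewrite plus_INR mult_INR => incid_ub.
have poor_ub : INR (b - 1) * INR #|T| <= INR (b - 1) * M.
  by apply: Rmult_le_compat_l => //; apply: pos_INR.
have b_split : INR b = INR (b - 1) + 1 by rewrite -[in LHS](subnK b_ge1) plus_INR.
have -> : 2 * INR a * INR b * INR q ^ 2 * ln (INR q) = INR (b - 1) * M + M.
  by rewrite b_split /M; ring.
lra.
Qed.
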